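(* Let $p>2$ be prime, $q$ a power of $p$, $Q\in\mathbb{F}_q[x]$ a nonzero squarefree polynomial and $r\ge1$ an integer. Then $$\#\{c\in\mathbb{F}_q[x]:\deg c\le r,\ Q\mid c'\}\le\begin{cases}q^{\frac r2+\left(\frac12-\frac1p\right)(r-2\deg Q)+2p},&\deg Q<r<2\deg Q,\\ q^{\frac r2+\frac12(r-2\deg Q)+2p},&r\ge2\deg Q,\end{cases}$$ where $c'$ denotes the formal derivative of $c$. *)

From Stdlib Require Import Reals.
From mathcomp Require Import all_boot all_order all_algebra all_field.
Set Implicit Arguments. Unset Strict Implicit. Unset Printing Implicit Defensive.
Import GRing.Theory.
Local Open Scope ring_scope.

Definition squarefree_poly (F : fieldType) (Q : {poly F}) : Prop :=
  forall d : {poly F}, d * d %| Q -> (size d <= 1)%N.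

(* number of c in F[x] with deg c <= r and Q | c' ;
   {poly_(r.+1) F} = polynomials of size <= r+1, i.e. degree <= r. *)
Definition count_deriv_div (F : finFieldType) (Q : {poly F}) (r : nat) : nat :=
  #|[set c : {poly_(r.+1) F} | Q %| (val c)^`()]|.

(* degree of a polynomial (only used for Q != 0) *)
Definition degp (F : fieldType) (Q : {poly F}) : nat := (size Q).-1.

Local Open Scope R_scope.
Definition exponent1 (p r dQ : nat) : R :=
  INR r / 2 + (1/2 - 1 / INR p) * (INR r - 2 * INR dQ) + 2 * INR p.
Definition exponent2 (p r dQ : nat) : R :=
  INR r / 2 + 1/2 * (INR r - 2 * INR dQ) + 2 * INR p.

(* Let V be the space of polynomials of degree <= r over F = F_q, d = deg Q,
   and phi : V -> F[x]/(Q) the linear map c |-> c' mod Q.  The quantity to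
   bound is q^(dim ker phi), so it suffices to bound the image E of phi from
   below.  Put N = r/p and L = (r - d)/p (integer parts).
   - A polynomial of degree < r whose coefficients at the indices = -1 mod p
     vanish is a derivative, so its residue mod Q lies in E.
   - Hence E + psi(F[x]_{<N}) is all of F[x]/(Q), where
     psi g = X^(p-1) g(X^p) mod Q reaches the remaining monomials.
   - Writing Q = sum_(a < p) X^a Q_a(X^p) (the p-sections of Q), psi maps
     every X^n Q_a with n < L into E: X^(p-1) (X^n Q_a)(X^p) agrees with a
     multiple of Q at all indices = -1 mod p.
   - Since Q is squarefree and Frobenius is onto F, the Q_a are coprime, and
     a general lemma on shifted multiples of a coprime family shows that the
     X^n Q_a (n < L) span a space of dimension >= L + min(L, d/p).
   Rank-nullity then gives dim ker phi + d + L + min(L, d/p) <= r + 1 + N,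
   from which both exponents of the statement follow by arithmetic. *)

From Stdlib Require Import Reals Lra Psatz.
From HB Require Import structures.
From mathcomp Require Import all_boot all_order all_algebra all_field zify.
Set Implicit Arguments. Unset Strict Implicit. Unset Printing Implicit Defensive.
Import GRing.Theory.

Section TruncationLinear.
Local Open Scope ring_scope.
Variables (R : nzRingType) (n : nat).

Fact npolyp_is_linear : linear (npolyp n : {poly R} -> {poly_n R}).
Proof.
move=> a f g; apply/npolyP => i; rewrite /= coefD coefZ !coef_npolyp coefD coefZ.
by case: ifP; rewrite ?mulr0 ?addr0.
Qed.
HB.instance Definition _ :=
  GRing.isLinear.Build R {poly R} {poly_n R} _ (npolyp n) npolyp_is_linear.

Lemma npolyp_val (p : {poly R}) : (size p <= n)%N -> val (npolyp n p) = p.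
Proof. exact: npolypK. Qed.

End TruncationLinear.

Section RemainderMap.
Local Open Scope ring_scope.
Variables (K : fieldType) (P : {poly K}).
Hypothesis P_neq0 : P != 0.
Local Notation e := (size P).-1.

(* Reduction modulo P, valued in the e-dimensional space of polynomials of
   degree < e = deg P; this is the vector space K[x]/(P). *)
Definition rem_npoly (g : {poly K}) : {poly_e K} := npolyp e (g %% P).

Lemma rem_npolyE (g : {poly K}) : val (rem_npoly g) = g %% P.
Proof. by apply: npolypK; rewrite -ltnS prednK ?size_poly_gt0 ?ltn_modp. Qed.

Fact rem_npoly_is_linear : linear rem_npoly.
Proof. by move=> a f g; rewrite /rem_npoly modpD modpZl linearP. Qed.
HB.instance Definition _ :=
  GRing.isLinear.Build K {poly K} {poly_e K} _ rem_npoly rem_npoly_is_linear.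

Lemma rem_npoly_mull (g : {poly K}) : rem_npoly (g * P) = 0.
Proof. by rewrite /rem_npoly modp_mull raddf0. Qed.

Lemma rem_npoly_val (w : {poly_e K}) : rem_npoly (val w) = w.
Proof.
apply: val_inj; rewrite rem_npolyE modp_small //.
by apply: leq_ltn_trans (size_npoly w) _; rewrite ltn_predL size_poly_gt0.
Qed.

Definition mulX_rem (w : {poly_e K}) : {poly_e K} := rem_npoly ('X * val w).
Fact mulX_rem_is_linear : linear mulX_rem.
Proof. by move=> a f g; rewrite /mulX_rem linearP /= mulrDr -scalerAr linearP. Qed.
HB.instance Definition _ :=
  GRing.isLinear.Build K {poly_e K} {poly_e K} _ mulX_rem mulX_rem_is_linear.

Lemma mulX_remE (g : {poly K}) : mulX_rem (rem_npoly g) = rem_npoly ('X * g).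
Proof. by apply: val_inj; rewrite /mulX_rem !rem_npolyE modp_mul. Qed.

End RemainderMap.
Arguments mulX_rem {K} P w.

Section ShiftedMultiples.
Local Open Scope ring_scope.
Variables (K : fieldType) (P0 : {poly K}) (P : seq {poly K}).
Hypotheses (P0_neq0 : P0 != 0) (P0_in_P : P0 \in P).
Hypothesis P_coprime :
  forall G : {poly K}, (forall f, f \in P -> G %| f) -> (size G <= 1)%N.
Local Notation e := (size P0).-1.
Local Notation rem := (rem_npoly P0).

(* A subspace of K[x]/(P0) that is stable under multiplication by X is an
   ideal; if it contains the residues of a family with trivial gcd, then by
   Bezout it contains 1, hence everything. *)
Lemma stable_subspace_full (U : {vspace {poly_e K}}) :
  (forall f, f \in P -> rem f \in U) ->
  (forall g, rem g \in U -> rem ('X * g) \in U) -> U = fullv.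
Proof.
move=> UP UX.
have U_mul h g : rem g \in U -> rem (h * g) \in U.
  elim/poly_ind: h g => [|h c IH] g Ug; first by rewrite mul0r raddf0 mem0v.
  rewrite mulrDl -mulrA mul_polyC linearD linearZ /=.
  by rewrite memvD ?memvZ ?IH ?UX.
have U_gcd f g : rem f \in U -> rem g \in U -> rem (gcdp f g) \in U.
  move=> Uf Ug; have /eqpP [[c1 c2] /= /andP [c1_neq0 _] Bezout] := egcdpE f g.
  have -> : gcdp f g = (c2 / c1) *: ((egcdp f g).1 * f + (egcdp f g).2 * g).
    by rewrite mulrC -scalerA -Bezout scalerA mulVf // scale1r.
  by rewrite linearZ linearD /= memvZ // memvD ?U_mul.
have common (s : seq {poly K}) : {subset s <= P} ->
    exists2 G, rem G \in U & forall f, f \in s -> G %| f.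
  elim: s => [|f s IH] sP; first by exists 0; rewrite ?raddf0 ?mem0v.
  have [G UG Gs] : exists2 G, rem G \in U & forall g, g \in s -> G %| g.
    by apply: IH => g gs; apply: sP; rewrite inE gs orbT.
  exists (gcdp f G); first exact: U_gcd (UP f (sP f (mem_head f s))) UG.
  move=> g /predU1P [-> | /Gs]; first exact: dvdp_gcdl.
  exact: dvdp_trans (dvdp_gcdr f G).
have [G UG GP] := common P (fun f (fP : f \in P) => fP).
have G_neq0 : G != 0.
  by apply: contraNneq P0_neq0 => G0; move: (GP _ P0_in_P); rewrite G0 dvd0p.
have GC := size1_polyC (P_coprime GP); set c := G`_0 in GC.
have U1 : rem 1 \in U.
  have c_neq0 : c != 0 by apply: contraNneq G_neq0 => c0; rewrite GC c0.
  have -> : (1 : {poly K}) = c^-1 *: G by rewrite GC -mul_polyC -polyCM mulVf.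
  by rewrite linearZ memvZ.
apply/eqP; rewrite eqEsubv subvf /=; apply/subvP => w _.
by rewrite -(rem_npoly_val P0_neq0 w) -[val w]mulr1 U_mul.
Qed.

Definition shift_residues (L : nat) : seq {poly_e K} :=
  [seq rem ('X^n * f) | f <- P, n <- iota 0 L].
Local Notation J L := <<shift_residues L>>%VS.

Lemma mem_shift_residues (L n : nat) (f : {poly K}) :
  f \in P -> (n < L)%N -> rem ('X^n * f) \in shift_residues L.
Proof. by move=> fP nL; apply/allpairsP; exists (f, n); rewrite mem_iota. Qed.

Lemma shift_span_mono (L : nat) : (J L <= J L.+1)%VS.
Proof.
apply/span_subvP => x /allpairsP [[f n] /= [fP]]; rewrite mem_iota => /andP [_ nL] ->.
by apply/memv_span/mem_shift_residues => //; apply: ltnW.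
Qed.

Lemma shift_span_mulX (L : nat) (g : {poly K}) :
  rem g \in J L -> rem ('X * g) \in J L.+1.
Proof.
have image_mulX : (linfun (mulX_rem P0) @: J L <= J L.+1)%VS.
  rewrite limg_span; apply/span_subvP => y /mapP [x /allpairsP [[f n] /= [fP]]].
  rewrite mem_iota add0n => nL -> ->.
  rewrite lfunE /= mulX_remE // mulrA -exprS.
  exact/memv_span/mem_shift_residues.
move=> /(memv_img (linfun (mulX_rem P0))) /(subvP image_mulX).
by rewrite lfunE /= mulX_remE.
Qed.

(* Each step either enlarges the span or it has become all of K[x]/(P0). *)
Lemma dim_shift_span (L : nat) : (minn L e <= \dim (J L))%N.
Proof.
elim: L => [|L IH]; first by rewrite min0n.
have [stable|grows] := eqVneq (J L.+1) (J L).
  suff -> : J L.+1 = fullv by rewrite dim_polyn geq_minr.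
  apply: stable_subspace_full => [f fP|g]; last by rewrite {1}stable => /shift_span_mulX.
  by rewrite -[f]mul1r -(expr0 'X); apply/memv_span/mem_shift_residues.
have : (\dim (J L) < \dim (J L.+1))%N.
  rewrite ltnNge; apply: contra grows => le.
  by rewrite eq_sym eqEdim shift_span_mono le.
move: IH; set a := \dim (J L); set b := \dim (J L.+1); lia.
Qed.

Section BoundedShifts.
Variables (M L : nat).
Hypothesis size_P : forall f, f \in P -> (size f + L <= M.+1)%N.

Lemma size_shift (f : {poly K}) (n : nat) :
  f \in P -> (n < L)%N -> (size ('X^n * f)%R <= M)%N.
Proof.
move=> fP nL; apply: leq_trans (size_polyMleq _ _) _; rewrite size_polyXn addSn /=.
by rewrite addnC -ltnS; apply: leq_trans (size_P fP); rewrite ltn_add2l.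
Qed.

Definition shifts : seq {poly_M K} :=
  [seq npolyp M ('X^n * f) | f <- P, n <- iota 0 L].

Definition rem_bounded (w : {poly_M K}) : {poly_e K} := rem (val w).
Fact rem_bounded_is_linear : linear rem_bounded.
Proof. by move=> a v w; rewrite /rem_bounded !linearP. Qed.
HB.instance Definition _ :=
  GRing.isLinear.Build K {poly_M K} {poly_e K} _ rem_bounded rem_bounded_is_linear.

Definition mul_P0 (h : {poly_L K}) : {poly_M K} := npolyp M (val h * P0).
Fact mul_P0_is_linear : linear mul_P0.
Proof. by move=> a v w; rewrite /mul_P0 linearP /= mulrDl -scalerAl linearP. Qed.
HB.instance Definition _ :=
  GRing.isLinear.Build K {poly_L K} {poly_M K} _ mul_P0 mul_P0_is_linear.

Lemma mul_P0E (h : {poly_L K}) : val (mul_P0 h) = val h * P0.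
Proof.
apply: npolyp_val; apply: leq_trans (size_polyMleq _ _) _.
have := size_P P0_in_P; have := size_npoly h; rewrite -subn1.
by move: (size (val h)) (size P0) => a b; lia.
Qed.

(* The shifts span a space of dimension at least L + min(L, deg P0): the
   kernel of the reduction contains the L independent multiples X^i P0, and
   its image is the span of shifted residues. *)
Lemma dim_shifts : (L + minn L e <= \dim <<shifts>>)%N.
Proof.
have mem_shifts f n : f \in P -> (n < L)%N -> npolyp M ('X^n * f) \in <<shifts>>%VS.
  by move=> fP nL; apply/memv_span/allpairsP; exists (f, n); rewrite mem_iota.
rewrite -(limg_ker_dim (linfun rem_bounded)); apply: leq_add.
  have kernel : (linfun mul_P0 @: fullv <= <<shifts>> :&: lker (linfun rem_bounded))%VS.
    case/andP: (npolyX_full K L) => /eqP <- _.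
    rewrite limg_span; apply/span_subvP => _ /mapP [_ /mapP [i _ ->] ->].
    have Xi : mul_P0 (npolyp L 'X^i) = npolyp M ('X^i * P0).
      by apply: val_inj; rewrite mul_P0E npolyp_val ?npolyp_val ?size_polyXn // size_shift.
    rewrite lfunE /= Xi memv_cap mem_shifts //= memv_ker lfunE /= /rem_bounded.
    by rewrite npolyp_val ?size_shift // rem_npoly_mull.
  apply: leq_trans (dimvS kernel); rewrite limg_dim_eq ?dim_polyn // capfv.
  apply/eqP/lker0P => v w; rewrite !lfunE /= => /(congr1 val); rewrite !mul_P0E.
  by move/(mulIf P0_neq0)/val_inj.
apply: leq_trans (dim_shift_span L) _; apply: dimvS.
apply/span_subvP => x /allpairsP [[f n] /= [fP]]; rewrite mem_iota add0n => nL ->.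
have -> : rem ('X^n * f) = linfun rem_bounded (npolyp M ('X^n * f)).
  by rewrite lfunE /= /rem_bounded npolyp_val // size_shift.
exact/memv_img/mem_shifts.
Qed.

End BoundedShifts.

End ShiftedMultiples.

Section PSections.
Local Open Scope ring_scope.
Variables (R : nzRingType) (p : nat).
Hypothesis p_gt0 : (0 < p)%N.

Definition psection (Q : {poly R}) (a : nat) : {poly R} :=
  \poly_(j < size Q) Q`_(a + p * j).

Lemma coef_psection (Q : {poly R}) (a j : nat) : (psection Q a)`_j = Q`_(a + p * j).
Proof.
rewrite coef_poly; case: ltnP => // Qj; rewrite nth_default //.
by apply: leq_trans Qj _; nia.
Qed.

Lemma psection_decomp (Q : {poly R}) :
  Q = \sum_(a < p) 'X^a * (psection Q a \Po 'X^p).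
Proof.
apply/polyP => k; rewrite coef_sum.
have kp : (k %% p < p)%N by rewrite ltn_mod.
rewrite (bigD1 (Ordinal kp)) //= big1 ?addr0.
  have kE := divn_eq k p; set q := (k %/ p)%N in kE *; set m := (k %% p)%N in kE kp *.
  rewrite coefXnM ifN; last by rewrite -leqNgt kE leq_addl.
  rewrite coef_comp_poly_Xn // ifT; last by rewrite kE addnK dvdn_mull.
  by rewrite coef_psection kE addnK mulnK // addnC mulnC.
move=> [a ap] /= /negbTE a_neq; rewrite coefXnM; case: ltnP => // ak.
rewrite coef_comp_poly_Xn //; case: ifP => // /dvdnP [m km].
have kE : k = (m * p + a)%N by rewrite -km subnK.
by move: a_neq; rewrite -val_eqE /= kE modnMDl modn_small // eqxx.
Qed.

End PSections.

Section CoprimePSections.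
Local Open Scope ring_scope.
Variables (F : finFieldType) (p : nat) (Q : {poly F}).
Hypotheses (p_prime : prime p) (p_char : p \in [pchar F]).
Hypothesis Q_squarefree : squarefree_poly Q.

(* A common divisor G of the p-sections gives G(X^p) = H^p dividing Q,
   where H has as coefficients the p-th roots of those of G (Frobenius is
   bijective on a finite field); squarefreeness forces G to be constant. *)
Lemma psections_coprime (G : {poly F}) :
  (forall a, (a < p)%N -> G %| psection p Q a) -> (size G <= 1)%N.
Proof.
move=> G_div.
have frob_inj : injective (fun c : F => c ^+ p).
  by move=> x y /=; rewrite -!(pFrobenius_autE p_char) => /fmorph_inj.
pose root_p := invF frob_inj.
have root_pK c : root_p c ^+ p = c by rewrite /root_p (f_invF frob_inj).
pose H := \poly_(i < size G) root_p G`_i.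
have HG : H ^+ p = G \Po 'X^p.
  have pc : p \in [pchar {poly F}] by rewrite pchar_poly.
  rewrite comp_polyE /H poly_def -(pFrobenius_autE pc) rmorph_sum /=.
  apply: eq_bigr => i _; rewrite pFrobenius_autE exprZn root_pK -!exprM mulnC //.
have HHQ : H * H %| Q.
  apply: dvdp_trans (_ : H ^+ p %| Q).
    by rewrite -expr2 dvdp_exp2l // prime_gt1.
  rewrite {1}(psection_decomp (prime_gt0 p_prime) Q) HG.
  apply: (big_ind (fun x => G \Po 'X^p %| x)) => [|x y|a _]; [exact: dvdp0 | exact: dvdp_add |].
  exact/dvdp_mull/dvdp_comp_poly/G_div.
apply/leq_sizeP => j j_ge1.
have : H`_j = 0 by rewrite nth_default //; apply: leq_trans (Q_squarefree HHQ) j_ge1.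
rewrite coef_poly; case: ltnP => [_ root0 | Gj _]; last by rewrite nth_default.
by rewrite -(root_pK G`_j) root0 expr0n gtn_eqF ?prime_gt0.
Qed.

End CoprimePSections.

Section Antiderivative.
Local Open Scope ring_scope.
Variable K : fieldType.

Lemma antiderivative (f : {poly K}) :
  (forall k, (k.+1)%:R = 0 :> K -> f`_k = 0) ->
  exists2 c : {poly K}, c^`() = f & (size c <= (size f).+1)%N.
Proof.
move=> f_vanish.
pose c := \poly_(i < (size f).+1) (if i is k.+1 then f`_k / k.+1%:R else 0).
exists c; last exact: size_poly.
apply/polyP => k; rewrite coef_deriv coef_poly ltnS.
case: ltnP => [_|fk]; last by rewrite mul0rn nth_default.
have [k1_eq0|k1_neq0] := eqVneq (k.+1%:R : K) 0.
  by rewrite f_vanish // mul0r mul0rn.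
by rewrite -[X in X = _]mulr_natr divfK.
Qed.

End Antiderivative.

Lemma modn_pred_of_dvd (p k : nat) :
  (0 < p)%N -> (p %| k.+1)%N -> (k %% p)%N = p.-1.
Proof.
move=> p_gt0 p_dvd.
have : (p %| (k %% p).+1)%N.
  by move: p_dvd; rewrite {1}(divn_eq k p) -addnS dvdn_addr // dvdn_mull.
move/(dvdn_leq (ltn0Sn _)); have := ltn_pmod k p_gt0; lia.
Qed.

Section DerivativeImage.
Local Open Scope ring_scope.
Variables (F : finFieldType) (p : nat) (Q : {poly F}) (r : nat).
Hypotheses (p_prime : prime p) (p_char : p \in [pchar F]).
Hypotheses (Q_neq0 : Q != 0) (Q_squarefree : squarefree_poly Q).
Local Notation d := (size Q).-1.
Hypothesis d_le_r : (d <= r)%N.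
Local Notation N := (r %/ p)%N.
Local Notation L := ((r - d) %/ p)%N.
Local Notation red := (rem_npoly Q).

Let p_gt0 : (0 < p)%N := prime_gt0 p_prime.

Lemma size_Q : size Q = d.+1.
Proof. by rewrite prednK // size_poly_gt0. Qed.

Definition deriv_rem (c : {poly_(r.+1) F}) : {poly_d F} := red (val c)^`().
Fact deriv_rem_is_linear : linear deriv_rem.
Proof. by move=> a f g; rewrite /deriv_rem /= derivD derivZ linearP. Qed.
HB.instance Definition _ :=
  GRing.isLinear.Build F {poly_(r.+1) F} {poly_d F} _ deriv_rem deriv_rem_is_linear.
Local Notation phi := (linfun deriv_rem).
Local Notation E := (limg phi).

Lemma count_deriv_div_dim : count_deriv_div Q r = (#|F| ^ \dim (lker phi))%N.
Proof.
rewrite /count_deriv_div -card_vspace; apply: eq_card => c.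
by rewrite inE memv_ker lfunE /= -val_eqE /= (rem_npolyE Q_neq0).
Qed.

(* Residues of polynomials of degree < r with no coefficient at an index
   = -1 mod p are derivatives, hence lie in the image E. *)
Lemma rem_in_deriv_image (f : {poly F}) : (size f <= r)%N ->
  (forall k, (k %% p)%N = p.-1 -> f`_k = 0) -> red f \in E.
Proof.
move=> f_size f_vanish.
have [c f_eq c_size] : exists2 c : {poly F}, c^`() = f & (size c <= (size f).+1)%N.
  apply: antiderivative => k k1_eq0; apply/f_vanish/modn_pred_of_dvd => //.
  by rewrite (dvdn_pcharf p_char) k1_eq0.
have c_small : (size c <= r.+1)%N by apply: leq_trans c_size _; rewrite ltnS.
have -> : red f = phi (npolyp r.+1 c) by rewrite lfunE /= /deriv_rem npolyp_val ?f_eq.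
exact: memv_img (memvf _).
Qed.

(* The complementary map g |-> X^(p-1) g(X^p) mod Q, on polynomials of
   degree < N, reaching the monomials at indices = -1 mod p. *)
Definition frob_rem (g : {poly_N F}) : {poly_d F} := red ('X^(p.-1) * (val g \Po 'X^p)).
Fact frob_rem_is_linear : linear frob_rem.
Proof.
move=> a f g; rewrite /frob_rem /= comp_polyD comp_polyZ mulrDr -scalerAr.
exact: linearP.
Qed.
HB.instance Definition _ :=
  GRing.isLinear.Build F {poly_N F} {poly_d F} _ frob_rem frob_rem_is_linear.
Local Notation psi := (linfun frob_rem).

Lemma deriv_frob_image_full : (E + limg psi)%VS = fullv.
Proof.
apply/eqP; rewrite eqEsubv subvf /=.
case/andP: (npolyX_full F d) => /eqP <- _.
apply/span_subvP => x /tnthP [i ->].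
have i_lt_d : (i < d)%N := ltn_ord i.
have -> : tnth (npolyX F d) i = red 'X^i.
  apply: val_inj; rewrite (rem_npolyE Q_neq0) modp_small; first exact: npolyXE.
  by rewrite size_polyXn (leq_ltn_trans i_lt_d) // ltn_predL size_poly_gt0.
have [i_pred|i_not_pred] := eqVneq (i %% p)%N p.-1.
  rewrite -[red _]add0r memv_add ?mem0v //.
  have XN : (size ('X^(i %/ p) : {poly F}) <= N)%N.
    by rewrite size_polyXn leq_divRL //; move: (leq_divM i p); lia.
  have -> : red 'X^i = psi (npolyp N 'X^(i %/ p)).
    rewrite lfunE /= /frob_rem npolyp_val // comp_Xn_poly -exprM -exprD.
    by rewrite mulnC addnC -i_pred -divn_eq.
  exact: memv_img (memvf _).
rewrite -[red _]addr0 memv_add ?mem0v // rem_in_deriv_image //.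
  by rewrite size_polyXn; lia.
by move=> k k_pred; rewrite coefXn; case: eqP => // ki; rewrite -ki k_pred eqxx in i_not_pred.
Qed.

Local Notation dl := (d %/ p)%N.

Lemma coef_frob_shifted_section (n a k : nat) : (a < p)%N ->
  ('X^(p.-1) * (('X^n * psection p Q a) \Po 'X^p))`_k =
  if (k %% p == p.-1)%N then ('X^(p * n + p.-1 - a) * Q)`_k else 0.
Proof.
move=> a_lt_p.
have kE := divn_eq k p; set q := (k %/ p)%N in kE *; set s := (k %% p)%N in kE *.
have s_lt_p : (s < p)%N by rewrite ltn_mod.
rewrite coefXnM coef_comp_poly_Xn //.
have [s_pred|s_not_pred] := eqVneq s p.-1; last first.
  case: ltnP => // pred_le_k; case: ifP => // /dvdnP [t kt].
  move: s_not_pred; rewrite /s (_ : k = t * p + p.-1)%N; last by lia.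
  by rewrite modnMDl modn_small ?eqxx // prednK // ltnSn.
rewrite coefXnM ifN -?leqNgt; last by lia.
have -> : (k - p.-1 = q * p)%N by lia.
rewrite dvdn_mull // mulnK // coefXnM.
have [q_lt_n|n_le_q] := ltnP q n.
  rewrite ifT //; have := leq_mul2r p q.+1 n; rewrite q_lt_n orbT mulSn; lia.
have npq : (n * p <= q * p)%N by rewrite leq_mul2r n_le_q orbT.
rewrite ifN -?leqNgt; last by lia.
rewrite coef_psection //; congr (Q`_ _).
by rewrite mulnBr mulnC [(p * n)%N]mulnC; lia.
Qed.

(* For n < L the shifted sections X^n Q_a are mapped by psi into E: the
   difference with X^m Q has degree < r and no coefficient at -1 mod p,
   while X^m Q vanishes mod Q. *)
Lemma frob_shifted_section_in_image (n a : nat) : (n < L)%N -> (a < p)%N ->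
  (size ('X^n * psection p Q a)%R <= N)%N ->
  psi (npolyp N ('X^n * psection p Q a)) \in E.
Proof.
move=> n_lt_L a_lt_p section_size; rewrite lfunE /= /frob_rem npolyp_val //.
set G := 'X^n * psection p Q a; set m := (p * n + p.-1 - a)%N.
set T := 'X^(p.-1) * (G \Po 'X^p) - 'X^m * Q.
have -> : 'X^(p.-1) * (G \Po 'X^p) = T + 'X^m * Q by rewrite addrNK.
rewrite linearD /= rem_npoly_mull addr0.
have XmQ_small k : (r <= k)%N -> ('X^m * Q)`_k = 0.
  move=> r_le_k; rewrite coefXnM; case: ltnP => // m_le_k.
  rewrite nth_default // size_Q.
  have h1 : ((r - d) %/ p * p <= r - d)%N := leq_divM _ _.
  have h2 : (n.+1 * p <= (r - d) %/ p * p)%N by rewrite leq_mul2r n_lt_L orbT.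
  by rewrite mulSn in h2; rewrite /m; nia.
apply: rem_in_deriv_image => [|k k_pred].
  apply/leq_sizeP => k r_le_k; rewrite coefB coef_frob_shifted_section // XmQ_small //.
  by case: ifP; rewrite subrr.
by rewrite coefB coef_frob_shifted_section // k_pred eqxx subrr.
Qed.

Definition sections : seq {poly F} := [seq psection p Q a | a <- iota 0 p].
Local Notation top_section := (psection p Q (d %% p)).

Lemma size_section (a : nat) : (size (psection p Q a) <= dl.+1)%N.
Proof.
apply/leq_sizeP => j j_gt; rewrite coef_psection // nth_default // size_Q.
have := ltn_ceil d p_gt0; have := leq_mul2l p dl.+1 j; rewrite j_gt orbT.
rewrite [(dl.+1 * p)%N]mulnC; lia.
Qed.

Lemma size_top_section : size top_section = dl.+1.
Proof.
apply/eqP; rewrite eqn_leq size_section /= ltnNge; apply/negP => small.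
move: (nth_default 0 small); rewrite coef_psection // mulnC addnC -divn_eq.
by apply/eqP; rewrite -lead_coefE lead_coef_eq0.
Qed.

Lemma top_section_in_sections : top_section \in sections.
Proof. by apply: map_f; rewrite mem_iota ltn_mod p_gt0. Qed.

Lemma sections_coprime (G : {poly F}) :
  (forall f, f \in sections -> G %| f) -> (size G <= 1)%N.
Proof.
move=> G_div; apply: (psections_coprime p_prime p_char Q_squarefree) => a a_lt_p.
by apply/G_div/map_f; rewrite mem_iota.
Qed.

Lemma size_sections_shift (f : {poly F}) : f \in sections -> (size f + L <= N.+1)%N.
Proof.
move=> /mapP [a _ ->]; apply: leq_trans (leq_add (size_section a) (leqnn _)) _.
rewrite addSn ltnS leq_divRL // mulnDl.
by move: (leq_divM d p) (leq_divM (r - d) p); lia.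
Qed.

Local Notation S := <<shifts sections N L>>%VS.

Lemma frob_shifts_in_image : (psi @: S <= E)%VS.
Proof.
rewrite limg_span; apply/span_subvP => y /mapP [x /allpairsP [[f n] /= [f_in]]].
rewrite mem_iota add0n => /andP [_ n_lt_L] -> ->.
move: (f_in) => /mapP [a]; rewrite mem_iota add0n => /andP [_ a_lt_p] f_eq.
rewrite f_eq in f_in *; apply: frob_shifted_section_in_image => //.
by have := size_shift size_sections_shift f_in n_lt_L.
Qed.

(* The key dimension count: with E + im psi = everything and psi(S) in E,
   dim E >= d - N + dim S, and dim S >= L + min(L, d/p). *)
Lemma dim_ker_deriv_rem :
  (\dim (lker phi) + d + (L + minn L dl) <= r.+1 + N)%N.
Proof.
have rank_phi := limg_ker_dim phi fullv; rewrite capfv dim_polyn in rank_phi.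
have sum_cap := dimv_sum_cap E (limg psi); rewrite deriv_frob_image_full dim_polyn in sum_cap.
have rank_psi := limg_ker_dim psi fullv; rewrite capfv dim_polyn in rank_psi.
have rank_psi_S := limg_ker_dim psi S.
have psiS_cap : (\dim (psi @: S) <= \dim (E :&: limg psi))%N.
  by apply: dimvS; rewrite subv_cap frob_shifts_in_image limgS // subvf.
have S_ker : (\dim (S :&: lker psi) <= \dim (lker psi))%N by apply/dimvS/capvSr.
have dim_S : (L + minn L dl <= \dim S)%N.
  have top_neq0 : top_section != 0 by rewrite -size_poly_gt0 size_top_section.
  have := dim_shifts top_neq0 top_section_in_sections sections_coprime size_sections_shift.
  by rewrite size_top_section.
lia.
Qed.

End DerivativeImage.

(* The two arithmetic consequences of the dimension count, according to
   whether L = (r - d)/p or d/p realises the minimum. *)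
Lemma exponent_bound_mid (p r d D : nat) : (0 < p)%N -> (d <= r <= 2 * d)%N ->
  (D + d + ((r - d) %/ p + minn ((r - d) %/ p) (d %/ p)) <= r.+1 + r %/ p)%N ->
  (p * D + r + p * d <= p * r + 2 * d + 3 * p)%N.
Proof.
move=> p_gt0 /andP [d_le_r r_le_2d].
have L_le : ((r - d) %/ p <= d %/ p)%N by apply: leq_div2r; lia.
rewrite (minn_idPl L_le).
have := leq_divM r p; have := ltn_ceil (r - d) p_gt0.
move: ((r - d) %/ p)%N (r %/ p)%N => L N; nia.
Qed.

Lemma exponent_bound_large (p r d D : nat) : (0 < p)%N -> (2 * d <= r)%N ->
  (D + d + ((r - d) %/ p + minn ((r - d) %/ p) (d %/ p)) <= r.+1 + r %/ p)%N ->
  (D + d <= r + 2 * p)%N.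
Proof.
move=> p_gt0 large.
have dl_le : (d %/ p <= (r - d) %/ p)%N by apply: leq_div2r; lia.
rewrite (minn_idPr dl_le).
have N_le : (r %/ p <= (r - d) %/ p + d %/ p + 1)%N.
  rewrite -ltnS -(ltn_pmul2r p_gt0).
  have := leq_divM (r - d) p; have := leq_divM d p.
  have := ltn_ceil (r - d) p_gt0; have := ltn_ceil d p_gt0; have := leq_divM r p.
  move: ((r - d) %/ p)%N (d %/ p)%N (r %/ p)%N => L dl N; nia.
lia.
Qed.

Section RealExponents.
Local Open Scope R_scope.

Lemma INR_leq (a b : nat) : (a <= b)%N -> INR a <= INR b.
Proof. by move/leP; apply: le_INR. Qed.

Lemma INR_addn (a b : nat) : INR (a + b)%N = INR a + INR b.
Proof. by rewrite -plusE plus_INR. Qed.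

Lemma INR_muln (a b : nat) : INR (a * b)%N = INR a * INR b.
Proof. by rewrite -multE mult_INR. Qed.

Lemma pow_le_Rpower (q D : nat) (e : R) : (1 < q)%N -> INR D <= e ->
  INR (q ^ D)%N <= Rpower (INR q) e.
Proof.
move=> q_gt1 De; have q_pos : 0 < INR q by apply/lt_0_INR/ltP; lia.
have -> : INR (q ^ D)%N = INR q ^ D.
  by elim: D {De} => [|D IH] //=; rewrite expnS INR_muln IH.
rewrite -Rpower_pow //; apply: Rle_Rpower => //.
by have := INR_leq q_gt1; rewrite /=; lra.
Qed.

Lemma exponent1_bound (p r d D : nat) : (3 <= p)%N ->
  (p * D + r + p * d <= p * r + 2 * d + 3 * p)%N -> INR D <= exponent1 p r d.
Proof.
move=> p_ge3 /INR_leq; rewrite !INR_addn ?INR_muln /= => H.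
have P3 : 3 <= INR p by have := INR_leq p_ge3; rewrite /=; lra.
rewrite /exponent1; apply: (Rmult_le_reg_l (INR p)); first lra.
have -> : INR p * (INR r / 2 + (1 / 2 - 1 / INR p) * (INR r - 2 * INR d) + 2 * INR p) =
    INR p * INR r - INR p * INR d - INR r + 2 * INR d + 2 * INR p * INR p.
  by field; lra.
nra.
Qed.

Lemma exponent2_bound (p r d D : nat) :
  (D + d <= r + 2 * p)%N -> INR D <= exponent2 p r d.
Proof.
move/INR_leq; rewrite !INR_addn ?INR_muln /= => H.
by rewrite /exponent2; lra.
Qed.

End RealExponents.

Theorem mainTheorem15 (p : nat) (F : finFieldType) (Q : {poly F}) (r : nat) :
  prime p -> (2 < p)%N -> (p \in [pchar F])%R ->
  (Q != 0)%R -> squarefree_poly Q -> (1 <= r)%N ->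
  ((degp Q < r)%N -> (r < 2 * degp Q)%N ->
     Rle (INR (count_deriv_div Q r)) (Rpower (INR #|F|) (exponent1 p r (degp Q))))
  /\
  ((2 * degp Q <= r)%N ->
     Rle (INR (count_deriv_div Q r)) (Rpower (INR #|F|) (exponent2 p r (degp Q)))).
Proof.
move=> p_prime p_gt2 p_char Q_neq0 Q_sqf _; rewrite /degp.
have q_gt1 : (1 < #|F|)%N := finNzRing_gt1 F.
have p_gt0 := prime_gt0 p_prime.
have count_eq := count_deriv_div_dim r Q_neq0.
have dim_bound d_le_r := dim_ker_deriv_rem p_prime p_char Q_neq0 Q_sqf d_le_r.
split => [d_lt_r r_lt_2d | large].
  have d_le_r := ltnW d_lt_r.
  rewrite count_eq; apply/pow_le_Rpower/exponent1_bound => //.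
  by apply/exponent_bound_mid/dim_bound => //; rewrite d_le_r ltnW.
have d_le_r : ((size Q).-1 <= r)%N by apply: leq_trans large; rewrite leq_pmull.
rewrite count_eq; apply/pow_le_Rpower/exponent2_bound => //.
exact/exponent_bound_large/dim_bound.
Qed.
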